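(* Let $c\in(0,1]$, and let $(x,y)$ with $x\in[0,1]^E$, $y\in[0,1]^n$ satisfy $x_e\le\min\{1,\sum_{i:e\in S_i}y_i\}$ for all $e\in E$ and $\sum_{i=1}^n y_i\le cn$ (e.g. an optimal solution of the LP below). Then there exists $\alpha\in[0,1]$ depending only on $c$ such that, setting $z_i=\alpha c+(1-\alpha)y_i$ for $i\in[n]$, we have $z\in[0,1]^n$, $\sum_i z_i\le cn$, and $$F(z)\ \ge\ \rho(c)\sum_{e\in E}w_e x_e .$$ In fact, for every $e\in E$, $1-\prod_{i:e\in S_i}(1-z_i)\ge\rho(c)\,x_e$.
   Context: An MC instance: elements $E$ with weights $w\colon E\to\mathbb{R}_{\ge0}$, sets $S_1,\dots,S_n\subseteq E$, $k=cn$. The LP is $\max\{\sum_e w_ex_e : x_e\le\min\{1,\sum_{i:e\in S_i}y_i\}\ \forall e,\ \sum_i y_i\le cn,\ y_i\ge0\}$. The coverage function is $f(T)=\sum_{e\in\bigcup_{i\in T}S_i}w_e$ for $T\subseteq[n]$, and its multilinear extension is $F(z)=\sum_{T\subseteq[n]}f(T)\prod_{i\in T}z_i\prod_{i\notin T}(1-z_i)$ for $z\in[0,1]^n$ (the expected value of $f$ on a random set containing each $i$ independently with probability $z_i$). Definition of $\rho(c)$: for $\alpha\in[0,1]$ and integer $m\ge1$ let $\sigma(\alpha,m)=\bigl(1-\alpha c-(1-\alpha)/m\bigr)^m$. If $c=1/s$ for some integer $s\ge1$, then $\rho(c)=1-(1-c)^{1/c}$. Otherwise $1/(s+1)<c<1/s$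 for a unique integer $s\ge1$, there is a unique $\alpha^*\in(0,1)$ with $\sigma(\alpha^*,s)=\sigma(\alpha^*,s+1)$, and $\rho(c)=1-\sigma(\alpha^*,s)$. *)

From HB Require Import structures.
From mathcomp Require Import all_boot all_order all_algebra.
From mathcomp Require Import boolp classical_sets reals.
Set Implicit Arguments. Unset Strict Implicit. Unset Printing Implicit Defensive.
Import Order.TTheory GRing.Theory Num.Theory.
Local Open Scope ring_scope.

Definition sigma {R : realType} (c alpha : R) (m : nat) : R :=
  (1 - alpha * c - (1 - alpha) / m%:R) ^+ m.

(* The defining property of rho(c), as in the paper:
   - if c = 1/s (s >= 1 integer), rho(c) = 1 - (1-c)^(1/c) = 1 - (1-c)^s;
   - if 1/(s+1) < c < 1/s (s >= 1), rho(c) = 1 - sigma(alpha*, s) where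
     alpha* in (0,1) satisfies sigma(alpha*, s) = sigma(alpha*, s+1). *)
Definition is_rho {R : realType} (c r : R) : Prop :=
  exists s : nat, (1 <= s)%N /\
    ((c = (s%:R)^-1 /\ r = 1 - (1 - c) ^+ s) \/
     ((s.+1%:R)^-1 < c /\ c < (s%:R)^-1 /\
      exists a : R, 0 < a /\ a < 1 /\ sigma c a s = sigma c a s.+1 /\
                    r = 1 - sigma c a s)).

(* rho(c): the (unique, by the paper) value with the defining property. *)
Definition rho {R : realType} (c : R) : R := xget 0 [set r | is_rho c r].

Definition coverage {R : realType} {E : finType} {n : nat}
  (w : E -> R) (S : 'I_n -> {set E}) (T : {set 'I_n}) : R :=
  \sum_(e : E | [exists i in T, e \in S i]) w e.

Definition multilin {R : realType} {E : finType} {n : nat}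
  (w : E -> R) (S : 'I_n -> {set E}) (z : 'I_n -> R) : R :=
  \sum_(T : {set 'I_n}) coverage w S T *
     (\prod_(i in T) z i) * (\prod_(i in ~: T) (1 - z i)).

From HB Require Import structures.
From mathcomp Require Import all_boot all_order all_algebra.
From mathcomp Require Import boolp classical_sets reals exp.
From mathcomp Require Import ring lra zify.
Set Implicit Arguments. Unset Strict Implicit. Unset Printing Implicit Defensive.
Import Order.TTheory GRing.Theory Num.Theory.
Local Open Scope ring_scope.

(* For an element e lying in d of the sets, AM-GM bounds the product of the
   1 - z_i over the sets containing e by the d-th power of their mean.  Since
   x_e <= sum_(i : e \in S_i) y_i, this mean is at most the convex combination
   x_e * b_d + (1 - x_e) * (1 - alpha c), where b_d = 1 - alpha c - (1 - alpha)/d,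
   and convexity of t |-> t^d gives a product at most x_e sigma(alpha, d) + 1 - x_e.
   It thus suffices to pick alpha with sigma(alpha, m) <= 1 - rho(c) for all m >= 1.
   As b_(m+1) is the mean of b_m and b_(m+2) with weights m and m + 2, AM-GM makes
   m |-> sigma(alpha, m) log-concave, so it is maximal wherever two consecutive
   values agree: at m = s for the alpha* defining rho(c), and, when c = 1/s, for
   the alpha with sigma(alpha, s + 1) = (1 - c)^s, which equals sigma(alpha, s)
   whatever alpha is.  Finally F(z) = sum_e w_e (1 - prod_(i : e \in S_i) (1 - z_i)). *)

Section Inequalities.
Variable R : realFieldType.

Lemma exprn_AGM2 (A B : R) (j k : nat) : 0 <= A -> 0 <= B ->
  A ^+ j * B ^+ k <= ((j%:R * A + k%:R * B) / (j + k)%:R) ^+ (j + k).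
Proof.
move=> A_ge0 B_ge0.
pose E (i : 'I_j + 'I_k) := if i is inl _ then A else B.
have E_ge0 : {in predT, forall i, 0 <= E i} by case.
have := (leif_AGM E_ge0).1.
rewrite !big_sumType /= card_sum !card_ord.
by rewrite !(eq_bigl xpredT _ (fun=> erefl)) !prodr_const !sumr_const !card_ord !mulr_natl.
Qed.

Lemma convex_exprn (A B t : R) (d : nat) : 0 <= A -> 0 <= B -> 0 <= t <= 1 ->
  (t * A + (1 - t) * B) ^+ d <= t * A ^+ d + (1 - t) * B ^+ d.
Proof.
move=> A_ge0 B_ge0 /andP[t_ge0 t_le1].
elim: d => [|d IHd]; first by rewrite !expr0; lra.
have mix_ge0 : 0 <= t * A + (1 - t) * B by nra.
have cheb : 0 <= (A - B) * (A ^+ d - B ^+ d).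
  have [AB|BA] := lerP A B.
    have : A ^+ d <= B ^+ d by rewrite lerXn2r.
    nra.
  have : B ^+ d <= A ^+ d by rewrite lerXn2r // ltW.
  nra.
rewrite !exprS; apply: le_trans (ler_wpM2l mix_ge0 IHd) _.
rewrite -subr_ge0.
have -> : t * (A * A ^+ d) + (1 - t) * (B * B ^+ d) -
   (t * A + (1 - t) * B) * (t * A ^+ d + (1 - t) * B ^+ d) =
   t * (1 - t) * ((A - B) * (A ^+ d - B ^+ d)) by ring.
by apply: mulr_ge0 => //; apply: mulr_ge0; lra.
Qed.

End Inequalities.

Section LogConcaveSequence.
Variables (R : realFieldType) (f : nat -> R).
Hypothesis f_ge0 : forall m, (0 < m)%N -> 0 <= f m.
Hypothesis f_gt0 : forall m, (1 < m)%N -> 0 < f m.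
Hypothesis f_logconcave : forall m, (1 < m)%N -> f m.-1 * f m.+1 <= f m ^+ 2.

Lemma logconcave_nonincr_step m : (0 < m)%N -> f m.+1 <= f m -> f m.+2 <= f m.+1.
Proof.
move=> m_gt0 le_m1m; rewrite -(ler_pM2l (f_gt0 (m := m.+1) _)) // -expr2.
have lc : f m * f m.+2 <= f m.+1 ^+ 2 := f_logconcave (m := m.+1) m_gt0.
by apply: le_trans lc; apply: ler_wpM2r => //; apply: f_ge0.
Qed.

Lemma logconcave_nondecr_step m : (0 < m)%N -> f m.+1 <= f m.+2 -> f m <= f m.+1.
Proof.
move=> m_gt0 le_m1m2; rewrite -(ler_pM2r (f_gt0 (m := m.+1) _)) // -expr2.
have lc : f m * f m.+2 <= f m.+1 ^+ 2 := f_logconcave (m := m.+1) m_gt0.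
by apply: le_trans lc; apply: ler_wpM2l => //; apply: f_ge0.
Qed.

Lemma logconcave_le_plateau s : (0 < s)%N -> f s = f s.+1 ->
  forall m, (0 < m)%N -> f m <= f s.
Proof.
move=> s_gt0 plateau m m_gt0.
have [le_ms|lt_sm] := leqP m s.
  have incr k : (0 < s - k)%N -> f (s - k) <= f (s - k).+1.
    elim: k => [|k IHk] k_lt; first by rewrite subn0 plateau.
    have e : (s - k = (s - k.+1).+1)%N by lia.
    by apply: logconcave_nondecr_step => //; rewrite -e IHk // e.
  pose D := [pred i | 0 < i <= s]%N.
  have D_convex : {in D &, forall i j k, i < k < j -> k \in D}%N.
    by move=> i j /andP[? ?] /andP[? ?] k /andP[? ?]; apply/andP; split; lia.
  apply: (Order.NatMonotonyTheory.nondecn_inP D_convex); rewrite ?inE ?m_gt0 ?s_gt0 ?leqnn //.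
  move=> i /andP[i_gt0 _] /andP[_ lt_is].
  have e : i = (s - (s - i))%N by rewrite subKn // ltnW.
  by rewrite e incr // -e.
have decr k : f (s + k.+1) <= f (s + k).
  elim: k => [|k IHk]; first by rewrite addn0 addn1 plateau.
  by rewrite !addnS; apply: logconcave_nonincr_step => //; [lia | rewrite -addnS].
have := @Order.NatMonotonyTheory.nonincnP _ R (fun k => f (s + k)) decr (m - s)%N 0 (leq0n _).
by rewrite /= addn0 subnKC // ltnW.
Qed.

End LogConcaveSequence.

Section SigmaSequence.
Variables (R : realType) (c a : R).
Hypotheses (c_gt0 : 0 < c) (c_le1 : c <= 1) (a_ge0 : 0 <= a) (a_le1 : a <= 1).

Definition sigma_base (m : nat) : R := 1 - a * c - (1 - a) / m%:R.

Lemma sigmaE m : sigma c a m = sigma_base m ^+ m.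
Proof. by []. Qed.

Lemma sigma_baseE m : sigma_base m = a * (1 - c) + (1 - a) * (1 - m%:R^-1).
Proof. by rewrite /sigma_base; ring. Qed.

Lemma sigma_base_ge0 m : (0 < m)%N -> 0 <= sigma_base m.
Proof.
move=> m_gt0; have : m%:R^-1 <= 1 :> R by rewrite invf_le1 ?ler1n ?ltr0n.
rewrite sigma_baseE => inv_le1.
by apply: addr_ge0; apply: mulr_ge0; rewrite // subr_ge0.
Qed.

Lemma sigma_base_le1 m : sigma_base m <= 1.
Proof.
rewrite /sigma_base -addrA gerDl -opprD oppr_le0.
by rewrite addr_ge0 ?divr_ge0 ?subr_ge0 // mulr_ge0 // ltW.
Qed.

Lemma sigma_base_gt0 m : c < 1 -> (1 < m)%N -> 0 < sigma_base m.
Proof.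
move=> c_lt1 m_gt1.
have : m%:R^-1 < 1 :> R by rewrite invf_lt1 ?ltr0n ?ltr1n // ltnW.
rewrite sigma_baseE; move: (m%:R^-1) => t t_lt1.
have [a_lt1|a_ge1] := ltrP a 1.
  have : 0 <= a * (1 - c) by rewrite mulr_ge0 // subr_ge0 ltW.
  have : 0 < (1 - a) * (1 - t) by rewrite mulr_gt0 // subr_gt0.
  lra.
have -> : a = 1 by apply/le_anti/andP.
by rewrite subrr mul0r addr0 mul1r subr_gt0.
Qed.

Lemma sigma_base_mean m : (0 < m)%N ->
  sigma_base m.+1 = (m%:R * sigma_base m + m.+2%:R * sigma_base m.+2) / (m + m.+2)%:R.
Proof.
move=> m_gt0; rewrite /sigma_base -[m.+2]addn2 -[m.+1]addn1 !natrD.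
have : 0 < m%:R :> R by rewrite ltr0n.
by move=> m_pos; field; rewrite !lt0r_neq0 //; lra.
Qed.

Lemma sigma_logconcave m : (1 < m)%N ->
  sigma c a m.-1 * sigma c a m.+1 <= sigma c a m ^+ 2.
Proof.
case: m => [|m] //= m_gt0.
have := exprn_AGM2 m m.+2 (sigma_base_ge0 m_gt0) (sigma_base_ge0 (isT : 0 < m.+2)%N).
by rewrite -sigma_base_mean // (_ : m + m.+2 = m.+1 * 2)%N ?exprM //; lia.
Qed.

Lemma sigma_le_plateau s : c < 1 -> (0 < s)%N -> sigma c a s = sigma c a s.+1 ->
  forall m, (0 < m)%N -> sigma c a m <= sigma c a s.
Proof.
move=> c_lt1; apply: logconcave_le_plateau => [m m_gt0|m m_gt1|].
- by rewrite exprn_ge0 ?sigma_base_ge0.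
- by rewrite exprn_gt0 ?sigma_base_gt0.
- exact: sigma_logconcave.
Qed.

End SigmaSequence.

Lemma sigma_at_inv_nat (R : realType) (c a : R) (s : nat) :
  c = s%:R^-1 -> sigma c a s = (1 - c) ^+ s.
Proof. by move=> cE; rewrite /sigma; congr (_ ^+ _); rewrite cE; ring. Qed.

Lemma exists_sigma_plateau_inv_nat (R : realType) (c : R) (s : nat) :
  (1 < s)%N -> c = s%:R^-1 ->
  exists2 a : R, 0 <= a <= 1 & sigma c a s.+1 = (1 - c) ^+ s.
Proof.
move=> s_gt1 cE; set S : R := s%:R.
have S_ge2 : 2 <= S by rewrite /S (ler_nat R 2 s).
have S1E : s.+1%:R = S + 1 :> R by rewrite -natr1.
have cS : c * S = 1 by rewrite cE mulVf //; apply: lt0r_neq0; lra.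
have S_gt0 : 0 < S by lra.
have S1_gt0 : 0 < S + 1 by lra.
have c_gt0 : 0 < c by rewrite cE invr_gt0.
have one_sub_c_ge0 : 0 <= 1 - c by nra.
pose t := (1 - c) `^ (S / (S + 1)).
have t_ge0 : 0 <= t := powR_ge0 _ _.
have t_root : t ^+ s.+1 = (1 - c) ^+ s.
  by rewrite -powR_mulrn // S1E -powRrM mulfVK ?powR_mulrn // lt0r_neq0.
have t_ge : 1 - c <= t.
  rewrite -(ler_pXn2r (n := s.+1)) ?nnegrE // t_root exprS.
  by rewrite ler_piMl ?exprn_ge0 //; lra.
have t_le : t * (S + 1) <= S.
  rewrite -ler_pdivlMr // -(ler_pXn2r (n := s.+1)) ?nnegrE ?divr_ge0 ?(ltW S_gt0) ?(ltW S1_gt0) //.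
  have := exprn_AGM2 s 1 one_sub_c_ge0 ler01.
  rewrite t_root expr1n mulr1 addn1 S1E -/S mulrBr (mulrC S c) cS mulr1 mul1r subrK; apply.
(* [sigma_base c a s.+1 = S / (S + 1) - a / (S * (S + 1))] is affine in [a]. *)
exists (S ^+ 2 - S * (S + 1) * t).
  have : 0 <= S * (S + 1) * (t - (1 - c)).
    by rewrite !mulr_ge0 ?subr_ge0 ?(ltW S_gt0) ?(ltW S1_gt0).
  have : S * (S + 1) * (1 - c) = S ^+ 2 - 1.
    by transitivity (S * S + S - (c * S) * (S + 1)); [ring | rewrite cS; ring].
  by move=> SSc SSt; apply/andP; split; nra.
rewrite /sigma -t_root S1E; congr (_ ^+ _); rewrite cE -/S; field.
by rewrite !lt0r_neq0.
Qed.

Lemma is_rho_plateau (R : realType) (c r : R) : 0 < c -> c < 1 -> is_rho c r ->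
  exists s a, [/\ (0 < s)%N, 0 <= a <= 1, sigma c a s = sigma c a s.+1
                & r = 1 - sigma c a s].
Proof.
move=> c_gt0 c_lt1 [s [s_gt0 [[cE ->] | [_ [_ [a [a_gt0 [a_lt1 [plateau ->]]]]]]]]].
  have s_gt1 : (1 < s)%N.
    by case: s s_gt0 cE => [|[|s]] // _ c1; move: c_lt1; rewrite c1 invr1 ltxx.
  have [a a01 sigmaS] := exists_sigma_plateau_inv_nat s_gt1 cE.
  by exists s, a; rewrite sigmaS sigma_at_inv_nat.
by exists s, a; rewrite !ltW.
Qed.

Lemma is_rho_le1 (R : realType) (c r : R) : 0 < c -> c <= 1 -> is_rho c r -> r <= 1.
Proof.
move=> c_gt0 c_le1 [s [s_gt0 [[_ ->] | [_ [_ [a [a_gt0 [a_lt1 [_ ->]]]]]]]]].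
  by rewrite gerDl oppr_le0 exprn_ge0 // subr_ge0.
by rewrite gerDl oppr_le0 exprn_ge0 // sigma_base_ge0 // ltW.
Qed.

Lemma exists_alpha_sigma_le_rho (R : realType) (c : R) : 0 < c -> c <= 1 ->
  exists2 a : R, 0 <= a <= 1 & forall m, (0 < m)%N -> sigma c a m <= 1 - rho c.
Proof.
move=> c_gt0 c_le1; rewrite /rho; case: xgetP => [r _ rho_r | _].
  have [c_lt1|c_ge1] := ltrP c 1.
    have [s [a [s_gt0 /andP[a_ge0 a_le1] plateau ->]]] := is_rho_plateau c_gt0 c_lt1 rho_r.
    exists a => [|m m_gt0]; first exact/andP.
    by rewrite opprB addrC subrK; apply: sigma_le_plateau.
  have c1 : c = 1 by apply/le_anti/andP.
  exists 1 => [|m m_gt0]; first by rewrite lexx ler01.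
  rewrite sigmaE sigma_baseE c1 !subrr mulr0 mul0r addr0 expr0n gtn_eqF //.
  by rewrite subr_ge0 (is_rho_le1 c_gt0 c_le1 rho_r).
(* [xget] falls back to [rho c = 0] when [is_rho c] has no witness. *)
exists 1 => [|m m_gt0]; first by rewrite lexx ler01.
by rewrite subr0 exprn_ile1 ?sigma_base_ge0 ?sigma_base_le1 ?lexx.
Qed.

Lemma mix_in01 (R : realFieldType) (a c y : R) :
  0 <= a <= 1 -> 0 <= c <= 1 -> 0 <= y <= 1 -> 0 <= a * c + (1 - a) * y <= 1.
Proof.
move=> /andP[a_ge0 a_le1] /andP[c_ge0 c_le1] /andP[y_ge0 y_le1].
have : a * c <= a by rewrite ler_piMr.
have : (1 - a) * y <= 1 - a by rewrite ler_piMr // subr_ge0.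
have : 0 <= a * c by rewrite mulr_ge0.
have : 0 <= (1 - a) * y by rewrite mulr_ge0 // subr_ge0.
by move=> *; apply/andP; split; lra.
Qed.

Lemma mean_one_sub_mix_le (R : realType) (I : finType) (P : pred I)
    (y : I -> R) (a c x : R) :
  (0 < #|P|)%N -> a <= 1 -> x <= \sum_(i in P) y i ->
  (\sum_(i in P) (1 - (a * c + (1 - a) * y i))) / #|P|%:R
    <= x * sigma_base c a #|P| + (1 - x) * (1 - a * c).
Proof.
move=> P_gt0 a_le1 x_le; rewrite -subr_ge0 /sigma_base.
have d_gt0 : 0 < #|P|%:R :> R by rewrite ltr0n.
have -> : \sum_(i in P) (1 - (a * c + (1 - a) * y i))
    = #|P|%:R * (1 - a * c) - (1 - a) * \sum_(i in P) y i.
  by rewrite sumrB big_split /= !sumr_const -mulr_sumr -mulr_natl; ring.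
set Y := \sum_(i in P) y i.
have -> : x * (1 - a * c - (1 - a) / #|P|%:R) + (1 - x) * (1 - a * c)
    - (#|P|%:R * (1 - a * c) - (1 - a) * Y) / #|P|%:R = (1 - a) * (Y - x) / #|P|%:R.
  by field; rewrite lt0r_neq0.
by rewrite divr_ge0 ?mulr_ge0 ?subr_ge0 // ltW.
Qed.

Lemma one_sub_prod_mix_ge (R : realType) (I : finType) (P : pred I) (y : I -> R)
    (a c r x : R) :
  0 < c -> c <= 1 -> 0 <= a <= 1 ->
  (forall m, (0 < m)%N -> sigma c a m <= 1 - r) ->
  (forall i, 0 <= y i <= 1) -> 0 <= x -> x <= Num.min 1 (\sum_(i | P i) y i) ->
  r * x <= 1 - \prod_(i | P i) (1 - (a * c + (1 - a) * y i)).
Proof.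
move=> c_gt0 c_le1 a01 sigma_le y01 x_ge0; rewrite le_min => /andP[x_le1 x_le_sum].
have [P0|P_gt0] := posnP #|P|.
  move: x_le_sum; rewrite !(eq_bigl _ _ (card0_eq P0)) !big_pred0_eq => x_le0.
  have -> : x = 0 by apply/le_anti/andP.
  by rewrite mulr0 subrr.
have c01 : 0 <= c <= 1 by rewrite c_le1 ltW.
have /andP[a_ge0 a_le1] := a01.
set u := fun i => 1 - (a * c + (1 - a) * y i).
have u_ge0 i : 0 <= u i by rewrite subr_ge0; case/andP: (mix_in01 a01 c01 (y01 i)).
set d := #|P|; set B := sigma_base c a d; set Q := 1 - a * c.
have B_ge0 : 0 <= B by apply: sigma_base_ge0.
have Q_ge0 : 0 <= Q by rewrite subr_ge0 mulr_ile1 // ltW.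
have Qd_le1 : Q ^+ d <= 1 by rewrite exprn_ile1 // /Q gerBl mulr_ge0 // ltW.
have mean_ge0 : 0 <= (\sum_(i in P) u i) / d%:R by rewrite divr_ge0 ?sumr_ge0.
have mean_le := mean_one_sub_mix_le c P_gt0 a_le1 x_le_sum.
have prod_le_mean := (leif_AGM (A := P) (in1W u_ge0)).1.
have : \prod_(i | P i) u i <= x * (1 - r) + (1 - x).
  apply: le_trans prod_le_mean _.
  apply: le_trans (lerXn2r d _ _ mean_le) _; rewrite ?nnegrE //.
    exact: le_trans mean_le.
  apply: le_trans (convex_exprn d B_ge0 Q_ge0 _) _; first by rewrite x_ge0.
  by rewrite lerD ?ler_wpM2l ?sigma_le ?ler_piMr ?subr_ge0.
by move=> prod_le; lra.
Qed.

Section SetWeights.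
Variables (R : comPzRingType) (I : finType).

Lemma prod_add_sum_set (a b : I -> R) :
  \prod_i (a i + b i) = \sum_(T : {set I}) (\prod_(i in T) a i) * \prod_(i in ~: T) b i.
Proof.
rewrite bigA_distr; apply: eq_bigr => T _.
rewrite (bigID (mem T)) /=; congr (_ * _).
  by apply: eq_bigr => i ->.
by apply: eq_big => [i|i /negbTE ->]; rewrite ?inE.
Qed.

(* The probability that a random set, containing each [i] independently with
   probability [z i], equals [T]. *)
Definition set_weight (z : I -> R) (T : {set I}) : R :=
  (\prod_(i in T) z i) * \prod_(i in ~: T) (1 - z i).

Lemma sum_set_weight z : \sum_(T : {set I}) set_weight z T = 1.
Proof. by rewrite -prod_add_sum_set big1 // => i _; rewrite addrC subrK. Qed.

Lemma sum_set_weight_avoid z (P : pred I) :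
  \sum_(T : {set I} | ~~ [exists i in T, P i]) set_weight z T = \prod_(i | P i) (1 - z i).
Proof.
have := prod_add_sum_set (fun i => if P i then 0 else z i) (fun i => 1 - z i).
rewrite (bigID P) /= [X in _ * X]big1 => [|i /negbTE ->]; last by rewrite addrC subrK.
rewrite mulr1 (eq_bigr (fun i => 1 - z i)) => [|i ->]; last by rewrite add0r.
move=> ->; rewrite big_mkcond; apply: eq_bigr => T _.
case: existsP => [[i /andP[iT Pi]]|avoid] /=.
  by rewrite (bigD1 i) //= Pi !mul0r.
congr (_ * _); apply: eq_bigr => i iT.
by case: ifP => // Pi; case: avoid; exists i; rewrite iT Pi.
Qed.

End SetWeights.

Lemma multilinE (R : realType) (E : finType) (w : E -> R) (n : nat)
    (S : 'I_n -> {set E}) (z : 'I_n -> R) :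
  multilin w S z = \sum_e w e * (1 - \prod_(i | e \in S i) (1 - z i)).
Proof.
rewrite /multilin /coverage.
under eq_bigr => T _ do rewrite -mulrA mulr_suml big_mkcond.
rewrite exchange_big /=; apply: eq_bigr => e _.
have split_one := sum_set_weight z.
rewrite (bigID (fun T : {set 'I_n} => [exists i in T, e \in S i])) /= sum_set_weight_avoid in split_one.
by rewrite -big_mkcond -mulr_sumr -[X in X - _]split_one addrK.
Qed.

Unset Implicit Arguments.

Theorem lemma3p1 (R : realType) (c : R) (hc0 : 0 < c) (hc1 : c <= 1) :
  exists alpha : R, 0 <= alpha <= 1 /\
  forall (E : finType) (w : E -> R) (n : nat) (S : 'I_n -> {set E})
         (x : E -> R) (y : 'I_n -> R),
    (forall e, 0 <= w e) ->
    (forall e, 0 <= x e <= 1) ->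
    (forall i, 0 <= y i <= 1) ->
    (forall e, x e <= Num.min 1 (\sum_(i | e \in S i) y i)) ->
    \sum_i y i <= c * n%:R ->
    let z := fun i : 'I_n => alpha * c + (1 - alpha) * y i in
    [/\ (forall i, 0 <= z i <= 1),
        \sum_i z i <= c * n%:R,
        rho c * (\sum_e w e * x e) <= multilin w S z &
        (forall e, rho c * x e <= 1 - \prod_(i | e \in S i) (1 - z i))].
Proof.
have [a a01 sigma_le] := exists_alpha_sigma_le_rho hc0 hc1.
exists a; split => // E w n S x y w_ge0 x01 y01 x_le sum_y_le z.
have elem_bound e : rho c * x e <= 1 - \prod_(i | e \in S i) (1 - z i).
  by case/andP: (x01 e) => x_ge0 _; exact: one_sub_prod_mix_ge.
split => //.
- by move=> i; apply: mix_in01 => //; rewrite hc1 ltW.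
- rewrite big_split /= sumr_const card_ord -mulr_sumr -mulr_natr.
  have : (1 - a) * \sum_i y i <= (1 - a) * (c * n%:R).
    by rewrite ler_wpM2l // subr_ge0; case/andP: a01.
  by case/andP: a01 => *; lra.
- rewrite multilinE mulr_sumr; apply: ler_sum => e _.
  by rewrite mulrCA ler_wpM2l.
Qed.
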